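(* Let $\mathcal Q$ be a complete orthomodular lattice and $V^{(\mathcal Q)}$ the $\mathcal Q$-valued universe. Let $[\![\cdot]\!]_{\mathcal Q}$ be a $\mathcal Q$-valued interpretation of the closed formulas of $NOM_{\mathcal Q}$ satisfying $[\![\phi\wedge\psi]\!]_{\mathcal Q}=[\![\phi]\!]_{\mathcal Q}\wedge[\![\psi]\!]_{\mathcal Q}$, $[\![\neg\phi]\!]_{\mathcal Q}=\neg[\![\phi]\!]_{\mathcal Q}$, $[\![\phi\rightarrow\psi]\!]_{\mathcal Q}=\neg[\![\phi]\!]_{\mathcal Q}\vee([\![\phi]\!]_{\mathcal Q}\wedge[\![\psi]\!]_{\mathcal Q})$ (Sasaki arrow), and $[\![(\forall x)\phi]\!]_{\mathcal Q}=\bigwedge_{u\in V^{(\mathcal Q)}}[\![\phi[x/u]]\!]_{\mathcal Q}$ (e.g., Takeuti's interpretation). For every closed formula $\phi$ of $NOM_{\mathcal Q}$, if $\vdash\phi$ is derivable in $NOM_{\mathcal Q}$, then $[\![\phi]\!]_{\mathcal Q}=\top$.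
   Context: A complete orthomodular lattice is a complete lattice with an order-reversing involution $\neg$ satisfying $a\wedge\neg a=\bot$, $a\vee\neg a=\top$, $a\le b\Rightarrow a\vee(\neg a\wedge b)=b$. $V^{(\mathcal Q)}$ is Takeuti's $\mathcal Q$-valued universe (defined as Boolean-valued models $V^{(\mathcal B)}$ with $\mathcal B$ replaced by $\mathcal Q$); the interpretation of atomic formulas $u=v$, $u\in v$ is a given element of $\mathcal Q$ and plays no role beyond the stated compositional clauses. The system $NOM_{\mathcal Q}$: formulas are first-order formulas with connectives $\wedge,\rightarrow,\neg$, quantifier $\forall$, relation symbols $=$ and $\in$, and constant symbols the elements of $V^{(\mathcal Q)}$ (no other function symbols); formulas differing only in names of bound variables are identified. Sequents $\phi_1,\ldots,\phi_n\vdash\psi$ have ordered finite antecedents. Rules, with $\Gamma$ a finite possibly empty sequence: (assumption) $\Gamma,\phi\vdash\phi$; (cut) $\Gamma\vdash\phi$, $\Gamma,\phi\vdash\psi$ $\Rightarrow$ $\Gamma\vdash\psi$; (paste) $\Gamma\vdash\phi$, $\Gamma\vdash\psi$ $\Rightarrow$ $\Gamma,\phi\vdash\psi$; (compatible exchange) $\Gamma,\phi,\psi\vdash\phi$, $\Gamma,\phi,\psi\vdash\chi$, $\Gamma,\psi,\phi\vdash\psi$ $\Rightarrow$ $\Gamma,\psi,\phi\vdash\chi$; ($\wedge$-intro) $\Gamma\vdash\phi$, $\Gamma\vdash\psi$ $\Rightarrow$ $\Gamma\vdash\phi\wedge\psi$; ($\wedge$-elim) $\Gamma\vdash\phi\wedge\psi$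 $\Rightarrow$ $\Gamma\vdash\phi$ and $\Rightarrow$ $\Gamma\vdash\psi$; ($\rightarrow$-intro) $\Gamma,\phi\vdash\psi$ $\Rightarrow$ $\Gamma\vdash\phi\rightarrow\psi$; ($\rightarrow$-elim) $\Gamma\vdash\phi\rightarrow\psi$ $\Rightarrow$ $\Gamma,\phi\vdash\psi$; (excluded middle) $\Gamma,\phi\vdash\psi$, $\Gamma,\neg\phi\vdash\psi$ $\Rightarrow$ $\Gamma\vdash\psi$; (explosion) $\Gamma\vdash\neg\phi$ $\Rightarrow$ $\Gamma,\phi\vdash\psi$; ($\forall$-intro) $\Gamma\vdash\phi$ $\Rightarrow$ $\Gamma\vdash(\forall x)\phi$, provided $x$ is not free in $\Gamma$; ($\forall$-elim) $\Gamma\vdash(\forall x)\phi$ $\Rightarrow$ $\Gamma\vdash\phi[x/t]$ for any term $t$. *)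

From Stdlib Require Import List Arith.
Import ListNotations.
Set Implicit Arguments.

(* A complete lattice presented by its order and arbitrary infima
   (meets of arbitrary subsets); binary meet/join, top and bottom are the
   derived lattice operations. *)
Record COML := {
  car :> Type;
  le : car -> car -> Prop;
  le_refl : forall a, le a a;
  le_trans : forall a b c, le a b -> le b c -> le a c;
  le_antisym : forall a b, le a b -> le b a -> a = b;
  inf : (car -> Prop) -> car;
  inf_lb : forall (S : car -> Prop) x, S x -> le (inf S) x;
  inf_glb : forall (S : car -> Prop) y, (forall x, S x -> le y x) -> le y (inf S);
  compl : car -> car;
  compl_invol : forall a, compl (compl a) = a;
  compl_antitone : forall a b, le a b -> le (compl b) (compl a);
  compl_meet : forall a, inf (fun x => x = a \/ x = compl a) = inf (fun _ => True);
  compl_join : forall a,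
      inf (fun x => le a x /\ le (compl a) x) = inf (fun _ => False);
  orthomodular : forall a b, le a b ->
      inf (fun x => le a x /\ le (inf (fun y => y = compl a \/ y = b)) x) = b
}.

Section LatOps.
Variable Q : COML.
Definition meet (a b : Q) : Q := inf Q (fun x => x = a \/ x = b).
Definition join (a b : Q) : Q := inf Q (fun x => le Q a x /\ le Q b x).
Definition top : Q := inf Q (fun _ => False).
Definition bot : Q := inf Q (fun _ => True).
Definition bigmeet (I : Type) (f : I -> Q) : Q := inf Q (fun x => exists i, x = f i).
End LatOps.

(** * Syntax of NOM_Q (de Bruijn indices; constants from V) *)
Inductive term (V : Type) : Type :=
| Var : nat -> term V
| Cst : V -> term V.
Arguments Var {V} _.
Arguments Cst {V} _.

Inductive form (V : Type) : Type :=
| FEq : term V -> term V -> form V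
| FIn : term V -> term V -> form V
| FAnd : form V -> form V -> form V
| FImp : form V -> form V -> form V
| FNeg : form V -> form V
| FAll : form V -> form V.
Arguments FEq {V} _ _.
Arguments FIn {V} _ _.
Arguments FAnd {V} _ _.
Arguments FImp {V} _ _.
Arguments FNeg {V} _.
Arguments FAll {V} _.

Section Syntax.
Variable V : Type.

Definition subst_term (s : nat -> term V) (t : term V) : term V :=
  match t with Var n => s n | Cst v => Cst v end.

Definition lift_term (t : term V) : term V :=
  subst_term (fun n => Var (S n)) t.

Definition up (s : nat -> term V) : nat -> term V :=
  fun n => match n with 0 => Var 0 | S m => lift_term (s m) end.

Fixpoint subst (s : nat -> term V) (f : form V) : form V :=
  match f with
  | FEq a b => FEq (subst_term s a) (subst_term s b)
  | FIn a b => FIn (subst_term s a) (subst_term s b)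
  | FAnd p q => FAnd (subst s p) (subst s q)
  | FImp p q => FImp (subst s p) (subst s q)
  | FNeg p => FNeg (subst s p)
  | FAll p => FAll (subst (up s) p)
  end.

Definition shift (f : form V) : form V := subst (fun n => Var (S n)) f.

Definition inst (f : form V) (t : term V) : form V :=
  subst (fun n => match n with 0 => t | S m => Var m end) f.

Definition closed_term (k : nat) (t : term V) : Prop :=
  match t with Var n => n < k | Cst _ => True end.

Fixpoint closedn (k : nat) (f : form V) : Prop :=
  match f with
  | FEq a b | FIn a b => closed_term k a /\ closed_term k b
  | FAnd p q | FImp p q => closedn k p /\ closedn k q
  | FNeg p => closedn k p
  | FAll p => closedn (S k) p
  end.

Definition closed (f : form V) : Prop := closedn 0 f.

(** * The sequent calculus NOM_Q.  [Γ, φ] is [Γ ++ [φ]]. *)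
Inductive derivable : list (form V) -> form V -> Prop :=
| d_assum : forall G p, derivable (G ++ [p]) p
| d_cut : forall G p q, derivable G p -> derivable (G ++ [p]) q -> derivable G q
| d_paste : forall G p q, derivable G p -> derivable G q -> derivable (G ++ [p]) q
| d_cexch : forall G p q r,
    derivable (G ++ [p; q]) p -> derivable (G ++ [p; q]) r ->
    derivable (G ++ [q; p]) q -> derivable (G ++ [q; p]) r
| d_andI : forall G p q, derivable G p -> derivable G q -> derivable G (FAnd p q)
| d_andEl : forall G p q, derivable G (FAnd p q) -> derivable G p
| d_andEr : forall G p q, derivable G (FAnd p q) -> derivable G q
| d_impI : forall G p q, derivable (G ++ [p]) q -> derivable G (FImp p q)
| d_impE : forall G p q, derivable G (FImp p q) -> derivable (G ++ [p]) q
| d_em : forall G p q, derivable (G ++ [p]) q -> derivable (G ++ [FNeg p]) q ->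
    derivable G q
| d_expl : forall G p q, derivable G (FNeg p) -> derivable (G ++ [p]) q
(* forall-intro: the variable (index 0) is not free in the shifted context *)
| d_allI : forall G p, derivable (map shift G) p -> derivable G (FAll p)
| d_allE : forall G p t, derivable G (FAll p) -> derivable G (inst p t).

End Syntax.

Definition sasaki_interp (Q : COML) (V : Type) (I : form V -> Q) : Prop :=
  (forall p q, closed p -> closed q -> I (FAnd p q) = meet Q (I p) (I q)) /\
  (forall p, closed p -> I (FNeg p) = compl Q (I p)) /\
  (forall p q, closed p -> closed q ->
     I (FImp p q) = join Q (compl Q (I p)) (meet Q (I p) (I q))) /\
  (forall p, closed (FAll p) -> I (FAll p) = bigmeet Q (fun u : V => I (inst p (Cst u)))).

(* A context [φ1, ..., φn] is interpreted, under an assignment of its free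
   variables, as the iterated Sasaki projection [φn & (... & (φ1 & ⊤))], where
   [a & s = a ∧ (¬a ∨ s)], and a sequent is valid when this value lies below
   the value of its conclusion.  Every rule preserves validity by an
   orthomodular-lattice fact about [&]: the adjunction [a & s ≤ b <-> s ≤ a →S b]
   gives the implication rules and explosion, [s ≤ a -> a & s = s] gives cut and
   paste, both sides of the compatible exchange rule collapse to [(p ∧ q) & s],
   and excluded middle rests on [s ≤ (p & s) ∨ (¬p & s)].  A derivable closed
   formula thus lies above the value of the empty context, which is ⊤. *)

From Stdlib Require Import List Lia.
Import ListNotations.

Section OrthomodularLattice.
Variable Q : COML.

Local Notation "x ≤ y" := (le Q x y) (at level 70).
Local Infix "⊓" := (meet Q) (at level 40, left associativity).
Local Infix "⊔" := (join Q) (at level 50, left associativity).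
Local Notation "¬ a" := (compl Q a) (at level 35, right associativity).
Local Notation "⊤" := (top Q).
Local Notation "⊥" := (bot Q).

Lemma meet_le_l a b : a ⊓ b ≤ a.
Proof. apply inf_lb; auto. Qed.

Lemma meet_le_r a b : a ⊓ b ≤ b.
Proof. apply inf_lb; auto. Qed.

Lemma le_meet a b c : c ≤ a -> c ≤ b -> c ≤ a ⊓ b.
Proof. intros Ha Hb. apply inf_glb. intros x [-> | ->]; assumption. Qed.

Lemma le_join_l a b : a ≤ a ⊔ b.
Proof. apply inf_glb. intros x [Ha _]. exact Ha. Qed.

Lemma le_join_r a b : b ≤ a ⊔ b.
Proof. apply inf_glb. intros x [_ Hb]. exact Hb. Qed.

Lemma join_le a b c : a ≤ c -> b ≤ c -> a ⊔ b ≤ c.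
Proof. intros Ha Hb. apply inf_lb. split; assumption. Qed.

Lemma le_top a : a ≤ ⊤.
Proof. apply inf_glb. intros _ []. Qed.

Lemma bot_le a : ⊥ ≤ a.
Proof. apply inf_lb. exact I. Qed.

Lemma meet_mono a b c d : a ≤ c -> b ≤ d -> a ⊓ b ≤ c ⊓ d.
Proof.
  intros Hac Hbd. apply le_meet.
  - apply le_trans with a; [apply meet_le_l | exact Hac].
  - apply le_trans with b; [apply meet_le_r | exact Hbd].
Qed.

Lemma join_mono a b c d : a ≤ c -> b ≤ d -> a ⊔ b ≤ c ⊔ d.
Proof.
  intros Hac Hbd. apply join_le.
  - apply le_trans with c; [exact Hac | apply le_join_l].
  - apply le_trans with d; [exact Hbd | apply le_join_r].
Qed.

Lemma meet_comm a b : a ⊓ b = b ⊓ a.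
Proof. apply le_antisym; apply le_meet; auto using meet_le_l, meet_le_r. Qed.

Lemma join_comm a b : a ⊔ b = b ⊔ a.
Proof. apply le_antisym; apply join_le; auto using le_join_l, le_join_r. Qed.

Lemma meet_compl_le_bot a : a ⊓ ¬a ≤ ⊥.
Proof. unfold meet. rewrite compl_meet. apply le_refl. Qed.

Lemma compl_le_compl a b : ¬a ≤ ¬b -> b ≤ a.
Proof. intro H. rewrite <- (compl_invol Q a), <- (compl_invol Q b). now apply compl_antitone. Qed.

Lemma join_le_compl_meet_compl a b : ¬a ⊔ b ≤ ¬(a ⊓ ¬b).
Proof.
  apply join_le.
  - apply compl_antitone, meet_le_l.
  - apply compl_le_compl. rewrite compl_invol. apply meet_le_r.
Qed.

Lemma orthomodular_le a b : a ≤ b -> ¬a ⊓ b ≤ ⊥ -> b ≤ a.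
Proof.
  intros Hab Hbot. apply le_trans with (a ⊔ (¬a ⊓ b)).
  - pose proof (orthomodular Q a b Hab) as E. change (a ⊔ (¬a ⊓ b) = b) in E.
    rewrite E. apply le_refl.
  - apply join_le; [apply le_refl | apply le_trans with ⊥; [exact Hbot | apply bot_le]].
Qed.

Definition sasaki_proj a s : Q := a ⊓ (¬a ⊔ s).

Definition sasaki_arrow a b : Q := ¬a ⊔ (a ⊓ b).

Lemma sasaki_proj_le a s : sasaki_proj a s ≤ a.
Proof. apply meet_le_l. Qed.

Lemma sasaki_proj_id a s : s ≤ a -> sasaki_proj a s = s.
Proof.
  intro Hsa.
  assert (Hs : s ≤ sasaki_proj a s) by (apply le_meet; [exact Hsa | apply le_join_r]).
  apply le_antisym; [apply orthomodular_le; [exact Hs |] | exact Hs].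
  (* [¬s ⊓ (a ⊓ (¬a ⊔ s))] lies below both [a ⊓ ¬s] and its complement. *)
  apply le_trans with ((a ⊓ ¬s) ⊓ ¬(a ⊓ ¬s)); [| apply meet_compl_le_bot].
  apply le_meet.
  - rewrite (meet_comm a). apply meet_mono; [apply le_refl | apply meet_le_l].
  - apply le_trans with (¬a ⊔ s); [| apply join_le_compl_meet_compl].
    apply le_trans with (sasaki_proj a s); apply meet_le_r.
Qed.

Lemma join_compl_sasaki_proj a s : ¬a ⊔ sasaki_proj a s = ¬a ⊔ s.
Proof.
  pose proof (orthomodular Q (¬a) (¬a ⊔ s) (le_join_l _ _)) as E.
  rewrite compl_invol in E. exact E.
Qed.

Lemma le_join_compl_sasaki_proj a s : s ≤ ¬a ⊔ sasaki_proj a s.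
Proof. rewrite join_compl_sasaki_proj. apply le_join_r. Qed.

Lemma join_sasaki_proj a c s : ¬a ≤ c -> c ⊔ sasaki_proj a s = c ⊔ s.
Proof.
  intro Hac. apply le_antisym; apply join_le; try apply le_join_l.
  - apply le_trans with (¬a ⊔ s); [apply meet_le_r | apply join_mono; auto using le_refl].
  - apply le_trans with (¬a ⊔ sasaki_proj a s); [apply le_join_compl_sasaki_proj |].
    apply join_mono; auto using le_refl.
Qed.

Lemma sasaki_proj_proj a b s : a ≤ b -> sasaki_proj a (sasaki_proj b s) = sasaki_proj a s.
Proof.
  intro Hab. unfold sasaki_proj at 1 3.
  now rewrite join_sasaki_proj by now apply compl_antitone.
Qed.

Lemma sasaki_adjunction a b s : sasaki_proj a s ≤ b <-> s ≤ sasaki_arrow a b.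
Proof.
  split; intro H.
  - apply le_trans with (¬a ⊔ sasaki_proj a s); [apply le_join_compl_sasaki_proj |].
    apply join_mono; [apply le_refl | apply le_meet; [apply sasaki_proj_le | exact H]].
  - apply le_trans with (a ⊓ b); [| apply meet_le_r].
    rewrite <- (sasaki_proj_id a (a ⊓ b)) by apply meet_le_l.
    apply meet_mono; [apply le_refl | apply join_le; [apply le_join_l | exact H]].
Qed.

Lemma sasaki_proj_proj_meet a b s :
  sasaki_proj b (sasaki_proj a s) ≤ a ->
  sasaki_proj b (sasaki_proj a s) = sasaki_proj (a ⊓ b) s.
Proof.
  intro Ha. rewrite <- (sasaki_proj_id (a ⊓ b) (sasaki_proj b (sasaki_proj a s))).
  - rewrite !sasaki_proj_proj; auto using meet_le_l, meet_le_r.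
  - apply le_meet; [exact Ha | apply sasaki_proj_le].
Qed.

Lemma sasaki_proj_comm a b s :
  sasaki_proj b (sasaki_proj a s) ≤ a -> sasaki_proj a (sasaki_proj b s) ≤ b ->
  sasaki_proj b (sasaki_proj a s) = sasaki_proj a (sasaki_proj b s).
Proof.
  intros Ha Hb. rewrite !sasaki_proj_proj_meet by assumption. now rewrite meet_comm.
Qed.

Lemma meet_compl_join_compl a b : a ≤ b -> ¬a ⊓ (¬b ⊔ a) = ¬b.
Proof.
  intro Hab. pose proof (sasaki_proj_id (¬a) (¬b) (compl_antitone Q _ _ Hab)) as E.
  unfold sasaki_proj in E. now rewrite compl_invol, join_comm in E.
Qed.

Lemma le_join_sasaki_proj_compl a s : s ≤ sasaki_proj a s ⊔ sasaki_proj (¬a) s.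
Proof.
  set (u := sasaki_proj a s). set (v := sasaki_proj (¬a) s). set (w := u ⊔ v).
  set (X := (¬a ⊔ u) ⊓ (a ⊔ v)).
  assert (Hu : u ≤ a) by apply sasaki_proj_le.
  assert (Hv : v ≤ ¬a) by apply sasaki_proj_le.
  assert (HsX : s ≤ X).
  { apply le_meet; [apply le_join_compl_sasaki_proj |].
    rewrite <- (compl_invol Q a) at 1. apply le_join_compl_sasaki_proj. }
  apply le_trans with X; [exact HsX |].
  apply orthomodular_le.
  - apply join_le; apply le_meet; try apply le_join_r.
    + apply le_trans with a; [exact Hu | apply le_join_l].
    + apply le_trans with (¬a); [exact Hv | apply le_join_l].
  - (* [¬w ⊓ X] lies below [¬u ⊓ (¬a ⊔ u) = ¬a] and [¬v ⊓ (a ⊔ v) = a]. *)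
    apply le_trans with (a ⊓ ¬a); [| apply meet_compl_le_bot].
    apply le_meet.
    + pose proof (meet_compl_join_compl v (¬a) Hv) as Ev. rewrite compl_invol in Ev.
      rewrite <- Ev. apply meet_mono; [apply compl_antitone, le_join_r | apply meet_le_r].
    + rewrite <- (meet_compl_join_compl u a Hu).
      apply meet_mono; [apply compl_antitone, le_join_l | apply meet_le_l].
Qed.

End OrthomodularLattice.

Section Substitution.
Variable V : Type.

Lemma subst_ext (f : form V) : forall s t : nat -> term V,
  (forall n, s n = t n) -> subst s f = subst t f.
Proof.
  induction f as [a b | a b | p IHp q IHq | p IHp q IHq | p IHp | p IHp]; intros s t H; simpl.
  1, 2: destruct a, b; simpl; rewrite ?H; reflexivity.
  1, 2: now rewrite (IHp s t), (IHq s t).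
  - now rewrite (IHp s t).
  - f_equal. apply IHp. intros [| n]; simpl; now rewrite ?H.
Qed.

Lemma subst_subst (f : form V) : forall s t : nat -> term V,
  subst s (subst t f) = subst (fun n => subst_term s (t n)) f.
Proof.
  induction f as [a b | a b | p IHp q IHq | p IHp q IHq | p IHp | p IHp]; intros s t; simpl.
  1, 2: now destruct a, b.
  1, 2: now rewrite IHp, IHq.
  - now rewrite IHp.
  - f_equal. rewrite IHp. apply subst_ext. intros [| n]; simpl; [reflexivity |].
    now destruct (t n).
Qed.

Lemma closedn_subst (f : form V) : forall k (s : nat -> term V),
  (forall n, closed_term k (s n)) -> closedn k (subst s f).
Proof.
  induction f as [a b | a b | p IHp q IHq | p IHp q IHq | p IHp | p IHp]; intros k s H; simpl.
  1, 2: destruct a, b; simpl; auto.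
  1, 2: split; auto.
  - auto.
  - apply IHp. intros [| n]; simpl; [lia |].
    specialize (H n). destruct (s n); simpl in *; [lia | exact I].
Qed.

Lemma subst_closedn (f : form V) : forall k (s : nat -> term V),
  closedn k f -> (forall n, n < k -> s n = Var n) -> subst s f = f.
Proof.
  induction f as [a b | a b | p IHp q IHq | p IHp q IHq | p IHp | p IHp];
    intros k s Hf H; simpl in *.
  1, 2: destruct Hf, a, b; simpl in *; rewrite ?H by assumption; reflexivity.
  1, 2: destruct Hf; now rewrite (IHp k s), (IHq k s).
  - now rewrite (IHp k s).
  - f_equal. apply (IHp (S k)); [exact Hf |].
    intros [| n] Hn; simpl; [reflexivity |]. now rewrite H by lia.
Qed.

End Substitution.

Section Soundness.
Variables (Q : COML) (V : Type) (I : form V -> Q).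
Hypothesis HI : sasaki_interp Q I.

Local Notation "x ≤ y" := (le Q x y) (at level 70).
Local Infix "⊔" := (join Q) (at level 50, left associativity).

Definition env_subst (rho : nat -> V) (n : nat) : term V := Cst (rho n).

Definition scons (u : V) (rho : nat -> V) (n : nat) : V :=
  match n with 0 => u | S m => rho m end.

Definition term_value (rho : nat -> V) (t : term V) : V :=
  match t with Var n => rho n | Cst v => v end.

Definition value (rho : nat -> V) (f : form V) : Q := I (subst (env_subst rho) f).

Definition ctx_value (rho : nat -> V) (G : list (form V)) : Q :=
  fold_left (fun s f => sasaki_proj Q (value rho f) s) G (top Q).

Definition sequent_valid (G : list (form V)) (p : form V) : Prop :=
  forall rho, ctx_value rho G ≤ value rho p.

Lemma closed_subst_env rho f : closed (subst (env_subst rho) f).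
Proof. apply closedn_subst. intros n. exact Logic.I. Qed.

Lemma ctx_value_snoc rho G p :
  ctx_value rho (G ++ [p]) = sasaki_proj Q (value rho p) (ctx_value rho G).
Proof. unfold ctx_value. now rewrite fold_left_app. Qed.

Lemma ctx_value_snoc2 rho G p q :
  ctx_value rho (G ++ [p; q]) =
  sasaki_proj Q (value rho q) (sasaki_proj Q (value rho p) (ctx_value rho G)).
Proof. unfold ctx_value. now rewrite fold_left_app. Qed.

Lemma value_shift u rho f : value (scons u rho) (shift f) = value rho f.
Proof. unfold value, shift. now rewrite subst_subst. Qed.

Lemma ctx_value_shift u rho G : ctx_value (scons u rho) (map (@shift V) G) = ctx_value rho G.
Proof.
  unfold ctx_value. generalize (top Q).
  induction G as [| f G IHG]; intro s; simpl; [reflexivity |].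
  now rewrite value_shift.
Qed.

Lemma value_inst rho p t : value rho (inst p t) = value (scons (term_value rho t) rho) p.
Proof.
  unfold value, inst. rewrite subst_subst. f_equal. apply subst_ext.
  intros [| n]; [now destruct t | reflexivity].
Qed.

Lemma value_and rho p q : value rho (FAnd p q) = meet Q (value rho p) (value rho q).
Proof. apply (proj1 HI); apply closed_subst_env. Qed.

Lemma value_neg rho p : value rho (FNeg p) = compl Q (value rho p).
Proof. apply (proj1 (proj2 HI)); apply closed_subst_env. Qed.

Lemma value_imp rho p q :
  value rho (FImp p q) = sasaki_arrow Q (value rho p) (value rho q).
Proof. apply (proj1 (proj2 (proj2 HI))); apply closed_subst_env. Qed.

Lemma inst_up_env_subst rho u p :
  inst (subst (up (env_subst rho)) p) (Cst u) = subst (env_subst (scons u rho)) p.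
Proof. unfold inst. rewrite subst_subst. apply subst_ext. now intros [| n]. Qed.

Lemma value_all rho p :
  value rho (FAll p) = bigmeet Q (fun u => I (inst (subst (up (env_subst rho)) p) (Cst u))).
Proof. apply (proj2 (proj2 (proj2 HI))), (closed_subst_env rho (FAll p)). Qed.

Lemma value_all_le rho p u : value rho (FAll p) ≤ value (scons u rho) p.
Proof.
  rewrite value_all. apply inf_lb. exists u. now rewrite inst_up_env_subst.
Qed.

Lemma le_value_all rho p y :
  (forall u, y ≤ value (scons u rho) p) -> y ≤ value rho (FAll p).
Proof.
  intro H. rewrite value_all. apply inf_glb. intros x [u ->].
  rewrite inst_up_env_subst. apply H.
Qed.

Theorem derivable_sound G p : derivable G p -> sequent_valid G p.
Proof.
  induction 1 as [G p | G p q _ IH1 _ IH2 | G p q _ IH1 _ IH2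
                  | G p q r _ IH1 _ IH2 _ IH3 | G p q _ IH1 _ IH2 | G p q _ IH
                  | G p q _ IH | G p q _ IH | G p q _ IH | G p q _ IH1 _ IH2
                  | G p q _ IH | G p _ IH | G p t _ IH]; intro rho.
  - rewrite ctx_value_snoc. apply sasaki_proj_le.
  - specialize (IH2 rho). now rewrite ctx_value_snoc, sasaki_proj_id in IH2 by apply IH1.
  - rewrite ctx_value_snoc, sasaki_proj_id by apply IH1. apply IH2.
  - specialize (IH1 rho). specialize (IH2 rho). specialize (IH3 rho).
    rewrite ctx_value_snoc2 in *. now rewrite <- sasaki_proj_comm.
  - rewrite value_and. apply le_meet; [apply IH1 | apply IH2].
  - apply le_trans with (value rho (FAnd p q)); [apply IH |].
    rewrite value_and. apply meet_le_l.
  - apply le_trans with (value rho (FAnd p q)); [apply IH |].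
    rewrite value_and. apply meet_le_r.
  - rewrite value_imp. apply sasaki_adjunction. rewrite <- ctx_value_snoc. apply IH.
  - rewrite ctx_value_snoc. apply sasaki_adjunction. rewrite <- value_imp. apply IH.
  - specialize (IH1 rho). specialize (IH2 rho).
    rewrite ctx_value_snoc in IH1, IH2. rewrite value_neg in IH2.
    apply le_trans with (sasaki_proj Q (value rho p) (ctx_value rho G)
                         ⊔ sasaki_proj Q (compl Q (value rho p)) (ctx_value rho G)).
    + apply le_join_sasaki_proj_compl.
    + apply join_le; assumption.
  - rewrite ctx_value_snoc. apply sasaki_adjunction.
    apply le_trans with (compl Q (value rho p)); [rewrite <- value_neg; apply IH | apply le_join_l].
  - apply le_value_all. intro u. rewrite <- (ctx_value_shift u). apply IH.
  - rewrite value_inst. apply le_trans with (value rho (FAll p)); [apply IH | apply value_all_le].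
Qed.

End Soundness.

Theorem corollary5p2 (Q : COML) (V : Type) (HV : inhabited V)
  (I : form V -> Q) (HI : @sasaki_interp Q V I) (phi : form V) :
  closed phi -> derivable nil phi -> I phi = top Q.
Proof.
  intros Hclosed Hder. destruct HV as [v].
  pose proof (derivable_sound Q V I HI nil phi Hder (fun _ => v)) as Htop.
  unfold ctx_value, value in Htop. simpl in Htop.
  rewrite (subst_closedn V phi 0) in Htop; [| exact Hclosed | intros n Hn; lia].
  apply le_antisym; [apply le_top | exact Htop].
Qed.
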